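(* Let $N\ge1$, $d\ge1$, $\varepsilon>0$, $(c_\ell)_{-N\le\ell\le N}\in\mathbb{C}^{2N+1}$, $\alpha,\beta\in\mathbb{C}^d$, and let $\mathcal L(t,\mathbf x,\dot{\mathbf x})$ be a lagrangian, continuous in $t\in[a,b]$ and continuously complex-differentiable in $(\mathbf x,\dot{\mathbf x})\in\mathbb{C}^d\times\mathbb{C}^d$. Let $\mathbf x\in\mathcal C_{pw}(d,N,\alpha,\beta)$ be a critical point of the discrete action \[ \mathcal A_{disc}(\mathbf x)=\int_a^b\mathcal L(t,\mathbf x(t),\Box_\varepsilon\mathbf x(t))\,dt, \] i.e. $\frac{d}{d\eta}\big|_{\eta=0}\mathcal A_{disc}(\mathbf x+\eta\mathbf h)=0$ for every $\mathbf h\in\mathcal C_{pw}(d,N,0,0)$. Then for every $j\in\{1,\dots,d\}$, \[ \Box_{-\varepsilon}\Big[\frac{\partial\mathcal L}{\partial\dot x_j}(\cdot,\mathbf x(\cdot),\Box_\varepsilon\mathbf x(\cdot))\Big](t)+\frac{\partial\mathcal L}{\partial x_j}(t,\mathbf x(t),\Box_\varepsilon\mathbf x(t))=0 \] for (almost) every $t\in[a,b]$; explicitly, $\sum_{\ell=-N}^{N}c_\ell\,\chi_\ell(t)\,\frac{\partial\mathcal L}{\partial\dot x_j}\big(t-\ell\varepsilon,\mathbf x(t-\ell\varepsilon),\Box_\varepsilon\mathbf x(t-\ell\varepsilon)\big)+\frac{\partial\mathcal L}{\partial x_j}(t,\mathbf x(t),\Box_\varepsilon\mathbf x(t))=0$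.
   Context: Fix $[a,b]$ and $\varepsilon>0$. For each integer $\ell$, $\chi_\ell$ is the indicator function of $[\max(a,a+\ell\varepsilon),\min(b,b+\ell\varepsilon)]$; a term multiplied by a vanishing $\chi_\ell$ is taken to be $0$. For $\alpha,\beta\in\mathbb{C}^d$, $\mathcal C_{pw}(d,N,\alpha,\beta)$ is the set of functions $\mathbf x:[a,b]\to\mathbb{C}^d$ with $\mathbf x(a)=\alpha$, $\mathbf x(b)=\beta$, continuous on each interval $[a+\ell\varepsilon,a+(\ell+1)\varepsilon]\cap[a,b]$, $\ell\in\mathbb{Z}$ (with the topology of uniform convergence). Given coefficients $(c_\ell)_{-N\le \ell\le N}$, the generalized scale derivative is \[ \Box_\varepsilon\mathbf x(t)=\sum_{\ell=-N}^{N}c_\ell\,\mathbf x(t+\ell\varepsilon)\chi_{-\ell}(t),\qquad t\in[a,b], \] acting componentwise, and $\Box_{-\varepsilon}$ denotes the operator obtained by replacing $\varepsilon$ with $-\varepsilon$ while keeping the same coefficients $c_\ell$: \[ \Box_{-\varepsilon}\mathbf f(t)=\sum_{\ell=-N}^{N}c_\ell\,\mathbf f(t-\ell\varepsilon)\chi_{\ell}(t). \] *)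

From Stdlib Require Import Reals ZArith.
From mathcomp Require Import ssreflect ssrfun ssrbool eqtype ssrnat seq fintype.

Set Implicit Arguments.
Unset Strict Implicit.

Local Open Scope R_scope.

Definition Cx : Type := (R * R)%type.
Definition C0 : Cx := (0, 0).
Definition C1 : Cx := (1, 0).
Definition RtoC (r : R) : Cx := (r, 0).
Definition Cadd (z w : Cx) : Cx := (fst z + fst w, snd z + snd w).
Definition Copp (z : Cx) : Cx := (- fst z, - snd z).
Definition Csub (z w : Cx) : Cx := Cadd z (Copp w).
Definition Cmul (z w : Cx) : Cx :=
  (fst z * fst w - snd z * snd w, fst z * snd w + snd z * fst w).
Definition Cmod (z : Cx) : R := sqrt (fst z * fst z + snd z * snd z).

Definition Cvec (d : nat) : Type := 'I_d -> Cx.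

Definition sumI (d : nat) (f : 'I_d -> Cx) : Cx :=
  foldr (fun i acc => Cadd (f i) acc) C0 (enum 'I_d).

Definition sumIR (d : nat) (f : 'I_d -> R) : R :=
  foldr (fun i acc => f i + acc) 0 (enum 'I_d).

Definition Vnorm (d : nat) (v : Cvec d) : R := sumIR (fun j => Cmod (v j)).

Definition Vadd (d : nat) (v w : Cvec d) : Cvec d := fun j => Cadd (v j) (w j).
Definition Vsub (d : nat) (v w : Cvec d) : Cvec d := fun j => Csub (v j) (w j).

Definition sumZ (N : nat) (f : Z -> Cx) : Cx :=
  foldr (fun k acc => Cadd (f (Z.of_nat k - Z.of_nat N)%Z) acc) C0
        (iota 0 (2 * N).+1).

Definition chi (a b eps : R) (l : Z) (t : R) : Cx :=
  if Rle_dec (Rmax a (a + IZR l * eps)) t then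
    if Rle_dec t (Rmin b (b + IZR l * eps)) then C1 else C0
  else C0.

Definition Box (a b eps : R) (N : nat) (c : Z -> Cx) (d : nat)
  (x : R -> Cvec d) (t : R) : Cvec d :=
  fun j => sumZ N (fun l =>
    Cmul (c l) (Cmul (x (t + IZR l * eps) j) (chi a b eps (- l) t))).

Definition Box_minus (a b eps : R) (N : nat) (c : Z -> Cx)
  (f : R -> Cx) (t : R) : Cx :=
  sumZ N (fun l => Cmul (c l) (Cmul (f (t - IZR l * eps)) (chi a b eps l t))).

Definition continuous_on_set (I : R -> Prop) (f : R -> Cx) : Prop :=
  forall t, I t -> forall e, 0 < e -> exists delta, 0 < delta /\
    forall s, I s -> Rabs (s - t) < delta -> Cmod (Csub (f s) (f t)) < e.

Definition Cpw (a b eps : R) (d : nat) (alpha beta : Cvec d)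
  (x : R -> Cvec d) : Prop :=
  x a = alpha /\ x b = beta /\
  forall (l : Z) (j : 'I_d),
    continuous_on_set
      (fun t => a + IZR l * eps <= t <= a + (IZR l + 1) * eps /\ a <= t <= b)
      (fun t => x t j).

Definition is_RInt_C (f : R -> Cx) (a b : R) (I : Cx) : Prop :=
  (exists pr : Riemann_integrable (fun t => fst (f t)) a b,
      RiemannInt pr = fst I) /\
  (exists pr : Riemann_integrable (fun t => snd (f t)) a b,
      RiemannInt pr = snd I).

Definition jointly_continuous (a b : R) (d : nat)
  (F : R -> Cvec d -> Cvec d -> Cx) : Prop :=
  forall t x v, a <= t <= b -> forall e, 0 < e -> exists delta, 0 < delta /\
    forall s y w, a <= s <= b ->
      Rabs (s - t) + Vnorm (Vsub y x) + Vnorm (Vsub w v) < delta ->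
      Cmod (Csub (F s y w) (F t x v)) < e.

Definition complex_partials (a b : R) (d : nat)
  (L : R -> Cvec d -> Cvec d -> Cx)
  (Lx Lv : 'I_d -> R -> Cvec d -> Cvec d -> Cx) : Prop :=
  forall t x v, a <= t <= b -> forall e, 0 < e -> exists delta, 0 < delta /\
    forall h k : Cvec d, Vnorm h + Vnorm k < delta ->
      Cmod (Csub (Csub (L t (Vadd x h) (Vadd v k)) (L t x v))
                 (sumI (fun j => Cadd (Cmul (Lx j t x v) (h j))
                                      (Cmul (Lv j t x v) (k j)))))
      <= e * (Vnorm h + Vnorm k).

Definition negligible (S : R -> Prop) : Prop :=
  forall e, 0 < e -> exists u v : nat -> R,
    (forall n, u n <= v n) /\
    (forall t, S t -> exists n, u n < t < v n) /\
    (forall n, sum_f_R0 (fun k => v k - u k) n <= e).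

(* Let E(t) = Box_{-eps}[dL/dxdot_j](t) + dL/dx_j(t) along the critical point x.
   The breakpoints a + k eps, b + k eps (|k| <= 2N) form a finite, hence
   negligible, set; at any other t0 in [a,b] we show E(t0) = 0.  Such a t0 is
   at distance r > 0 from all breakpoints, so every chi_l is locally constant
   near t0 and near each center t0 - l eps, where x and Box x are continuous.
   If E(t0) <> 0 we perturb x by h = conj(E(t0)) * tent(. - t0) e_j.  Box h is a
   sum of tents at the centers; freezing the partials of L there (mean value
   theorem plus joint continuity) gives, for small eta > 0, the pointwise gain
     eta * G(t) <= Re L(x + eta h) - Re L(x),
   with G continuous of integral >= (3/4)|E(t0)|^2 * (tent area) > 0, which
   contradicts the vanishing derivative of the action at eta = 0.
   Order of the file: complex arithmetic and finite sums, indicators and tents,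
   continuity of x and Box x, the lagrangian along a line, the "no uniform
   gain" lemma, the local argument (section LocalVariation), finite sets are
   negligible, and the theorem. *)

From Pilot Require Import Defs.
From Stdlib Require Import Reals ZArith Lra Lia FunctionalExtensionality Classical.
From Coquelicot Require Import Coquelicot.
From mathcomp Require Import ssreflect ssrfun ssrbool eqtype ssrnat seq fintype.
From mathcomp Require Import zify.
(* Imported again so that its names (C1, Cmod, RtoC, ...) shadow their
   homonyms from Reals and Coquelicot. *)
From Pilot Require Import Defs.
Local Open Scope R_scope.

Lemma Cx_eq (z w : Cx) : fst z = fst w -> snd z = snd w -> z = w.
Proof. by case: z => ? ?; case: w => ? ? /= -> ->. Qed.

Ltac cring := apply Cx_eq; simpl; ring.

Definition Cconj (z : Cx) : Cx := (fst z, - snd z).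

Lemma Cmod_Coquelicot (z : Cx) : Cmod z = Coquelicot.Complex.Cmod z.
Proof. rewrite /Cmod /Coquelicot.Complex.Cmod. f_equal. simpl. ring. Qed.

Lemma Cmod_add_le (z w : Cx) : Cmod (Cadd z w) <= Cmod z + Cmod w.
Proof. rewrite !Cmod_Coquelicot. exact: (Cmod_triangle z w). Qed.

Lemma Cmod_mul (z w : Cx) : Cmod (Cmul z w) = Cmod z * Cmod w.
Proof. rewrite !Cmod_Coquelicot. exact: (Cmod_mult z w). Qed.

Lemma Cmod_ge0 (z : Cx) : 0 <= Cmod z.
Proof. exact: sqrt_pos. Qed.

Lemma Cmod_C0 : Cmod C0 = 0.
Proof. rewrite /Cmod /=. replace (0 * 0 + 0 * 0) with 0 by ring. exact: sqrt_0. Qed.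

Lemma Cmod_C1 : Cmod C1 = 1.
Proof. rewrite /Cmod /=. replace (1 * 1 + 0 * 0) with 1 by ring. exact: sqrt_1. Qed.

Lemma Cmod_RtoC r : Cmod (RtoC r) = Rabs r.
Proof. rewrite /Cmod /RtoC /= -sqrt_Rsqr_abs /Rsqr. f_equal. ring. Qed.

Lemma Rabs_fst_le (z : Cx) : Rabs (fst z) <= Cmod z.
Proof.
  rewrite /Cmod -sqrt_Rsqr_abs. apply: sqrt_le_1_alt. rewrite /Rsqr.
  have := Rle_0_sqr (snd z). rewrite /Rsqr. lra.
Qed.

(* Re (conj z * z) = |z|^2 is positive for z <> 0: this is the gain direction. *)
Lemma Cconj_mul_pos z : z <> C0 -> 0 < fst (Cmul (Cconj z) z).
Proof.
  case: z => u v Hz /=.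
  have [Hu|Hu] := Req_dec u 0; have [Hv|Hv] := Req_dec v 0.
  - by case: Hz; rewrite Hu Hv.
  - have := Rsqr_pos_lt v Hv. rewrite /Rsqr. nra.
  - have := Rsqr_pos_lt u Hu. rewrite /Rsqr. nra.
  - have := Rsqr_pos_lt u Hu. have := Rle_0_sqr v. rewrite /Rsqr. nra.
Qed.

(** Finite sums over sequences.  [sumI], [Vnorm] and [sumZ] from Defs are
    instances of [sumC] / [sumR] below. *)

Definition sumC {T : Type} (s : seq T) (g : T -> Cx) : Cx :=
  foldr (fun k acc => Cadd (g k) acc) C0 s.
Definition sumR {T : Type} (s : seq T) (g : T -> R) : R :=
  foldr (fun k acc => g k + acc) 0 s.

Section FoldUnit.
Variables (A : Type) (op : A -> A -> A) (e : A).
Hypothesis op_e_l : forall y, op e y = y.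
Hypothesis op_e_r : forall y, op y e = y.

Lemma foldr_unit (T : eqType) (s : seq T) (g : T -> A) :
  (forall k, k \in s -> g k = e) -> foldr (fun k acc => op (g k) acc) e s = e.
Proof.
  elim: s => [|k s IH] Hg //=.
  rewrite Hg ?mem_head // IH // => k' Hk'. by apply: Hg; rewrite in_cons Hk' orbT.
Qed.

Lemma foldr_single (T : eqType) (s : seq T) (g : T -> A) k0 : uniq s -> k0 \in s ->
  (forall k, k \in s -> k <> k0 -> g k = e) ->
  foldr (fun k acc => op (g k) acc) e s = g k0.
Proof.
  elim: s => [|k s IH] //= /andP [Hk Hu]; rewrite in_cons => /orP [/eqP Ek|Hin] Hg.
  - subst k0. rewrite foldr_unit // => k' Hk'.
    apply: Hg; first by rewrite in_cons Hk' orbT.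
    by move=> E; subst k'; rewrite Hk' in Hk.
  - rewrite Hg ?mem_head ?op_e_l ?IH // => [k' Hk' Ne|E].
    + by apply: Hg => //; rewrite in_cons Hk' orbT.
    + by subst k; rewrite Hin in Hk.
Qed.
End FoldUnit.

Lemma sumC_ext (T : eqType) (s : seq T) g g' :
  (forall k, k \in s -> g k = g' k) -> sumC s g = sumC s g'.
Proof.
  elim: s => [|k s IH] H //=. rewrite H ?mem_head // IH // => k' Hk'.
  by apply: H; rewrite in_cons Hk' orbT.
Qed.

Lemma sumR_ext (T : eqType) (s : seq T) g g' :
  (forall k, k \in s -> g k = g' k) -> sumR s g = sumR s g'.
Proof.
  elim: s => [|k s IH] H //=. rewrite H ?mem_head // IH // => k' Hk'.
  by apply: H; rewrite in_cons Hk' orbT.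
Qed.

Lemma sumR_le (T : eqType) (s : seq T) g g' :
  (forall k, k \in s -> g k <= g' k) -> sumR s g <= sumR s g'.
Proof.
  elim: s => [|k s IH] H /=; first lra.
  have := H k (mem_head _ _).
  have : sumR s g <= sumR s g' by apply: IH => k' Hk'; apply: H; rewrite in_cons Hk' orbT.
  lra.
Qed.

Lemma sumR_scal (T : Type) (s : seq T) g r : sumR s (fun k => r * g k) = r * sumR s g.
Proof. elim: s => [|k s IH] /=; [ring | rewrite IH; ring]. Qed.

Lemma sumR_bound (T : Type) (s : seq T) g r : (forall k, g k <= r) ->
  sumR s g <= INR (size s) * r.
Proof.
  move=> H. elim: s => [|k s IH]; first by rewrite /=; lra.
  have -> : INR (size (k :: s)) = INR (size s) + 1 by rewrite -S_INR.
  have := H k. rewrite /=. lra.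
Qed.

Lemma sumR_sub (T : Type) (s : seq T) g g' :
  sumR s (fun k => g k - g' k) = sumR s g - sumR s g'.
Proof. elim: s => [|k s IH] /=; [ring | rewrite IH; ring]. Qed.

Lemma Cmod_sumC (T : Type) (s : seq T) g : Cmod (sumC s g) <= sumR s (fun k => Cmod (g k)).
Proof.
  elim: s => [|k s IH] /=; first by rewrite Cmod_C0; lra.
  have := Cmod_add_le (g k) (sumC s g). lra.
Qed.

Lemma fst_sumC (T : Type) (s : seq T) g : fst (sumC s g) = sumR s (fun k => fst (g k)).
Proof. by elim: s => [|k s IH] //=; rewrite IH. Qed.

Lemma Cmul_sumC (T : Type) w (s : seq T) g :
  Cmul w (sumC s g) = sumC s (fun k => Cmul w (g k)).
Proof. elim: s => [|k s IH] /=; [cring | rewrite -IH; cring]. Qed.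

Lemma sumC_add (T : Type) (s : seq T) g g' :
  sumC s (fun k => Cadd (g k) (g' k)) = Cadd (sumC s g) (sumC s g').
Proof. elim: s => [|k s IH] /=; [cring | rewrite IH; cring]. Qed.

Lemma sumC_sub (T : Type) (s : seq T) g g' :
  sumC s (fun k => Csub (g k) (g' k)) = Csub (sumC s g) (sumC s g').
Proof. elim: s => [|k s IH] /=; [cring | rewrite IH; cring]. Qed.

Definition idx (N : nat) : seq nat := iota 0 (2 * N).+1.
Definition zk (N k : nat) : Z := (Z.of_nat k - Z.of_nat N)%Z.
Definition sumZR (N : nat) (f : Z -> R) : R := sumR (idx N) (fun k => f (zk N k)).

Lemma sumZ_sumC N f : sumZ N f = sumC (idx N) (fun k => f (zk N k)).
Proof. by []. Qed.

Lemma idx_range {N k : nat} : k \in idx N -> (- Z.of_nat N <= zk N k <= Z.of_nat N)%Z.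
Proof. rewrite /idx /zk mem_iota. lia. Qed.

Lemma idx_zk {N : nat} {l : Z} : (- Z.of_nat N <= l <= Z.of_nat N)%Z ->
  exists2 k, k \in idx N & zk N k = l.
Proof.
  move=> Hl. exists (Z.to_nat (l + Z.of_nat N)); rewrite /idx ?mem_iota /zk; lia.
Qed.

Lemma idx_zk_inj {N k k' : nat} : k \in idx N -> zk N k = zk N k' -> k = k'.
Proof. rewrite /zk. lia. Qed.

Lemma sumZ_ext N f f' : (forall l, (- Z.of_nat N <= l <= Z.of_nat N)%Z -> f l = f' l) ->
  sumZ N f = sumZ N f'.
Proof. move=> H. rewrite !sumZ_sumC. apply: sumC_ext => k /idx_range. exact: H. Qed.

Lemma sumZR_ext N f f' : (forall l, (- Z.of_nat N <= l <= Z.of_nat N)%Z -> f l = f' l) ->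
  sumZR N f = sumZR N f'.
Proof. move=> H. apply: sumR_ext => k /idx_range. exact: H. Qed.

Lemma sumZR_le N f f' : (forall l, (- Z.of_nat N <= l <= Z.of_nat N)%Z -> f l <= f' l) ->
  sumZR N f <= sumZR N f'.
Proof. move=> H. apply: sumR_le => k /idx_range. exact: H. Qed.

Lemma sumZR_ge0 N f : (forall l, (- Z.of_nat N <= l <= Z.of_nat N)%Z -> 0 <= f l) ->
  0 <= sumZR N f.
Proof.
  move=> H. have <- : sumZR N (fun _ => 0) = 0 by rewrite /sumZR; elim: (idx N) => //= k s ->; ring.
  exact: sumZR_le.
Qed.

Lemma Cmod_sumZ N f : Cmod (sumZ N f) <= sumZR N (fun l => Cmod (f l)).
Proof. rewrite sumZ_sumC. exact: Cmod_sumC. Qed.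

Lemma sumZ_sub N f g : sumZ N (fun l => Csub (f l) (g l)) = Csub (sumZ N f) (sumZ N g).
Proof. rewrite !sumZ_sumC. exact: sumC_sub. Qed.

Lemma fst_sumZ N f : fst (sumZ N f) = sumZR N (fun l => fst (f l)).
Proof. rewrite sumZ_sumC. exact: fst_sumC. Qed.

Lemma Cmul_sumZ w N f : Cmul w (sumZ N f) = sumZ N (fun l => Cmul w (f l)).
Proof. rewrite !sumZ_sumC. exact: Cmul_sumC. Qed.

Lemma sumZR_scal N f r : sumZR N (fun l => r * f l) = r * sumZR N f.
Proof. exact: sumR_scal. Qed.

Lemma sumZ_zero N f : (forall l, (- Z.of_nat N <= l <= Z.of_nat N)%Z -> f l = C0) ->
  sumZ N f = C0.
Proof.
  move=> H. rewrite sumZ_sumC. apply: (@foldr_unit _ Cadd C0) => [y|k /idx_range].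
  - cring.
  - exact: H.
Qed.

Lemma sumZ_single {N f l} : (- Z.of_nat N <= l <= Z.of_nat N)%Z ->
  (forall l', (- Z.of_nat N <= l' <= Z.of_nat N)%Z -> l' <> l -> f l' = C0) ->
  sumZ N f = f l.
Proof.
  move=> Hl H. have [k0 Hk0 Ek0] := idx_zk Hl. rewrite -Ek0. rewrite sumZ_sumC.
  apply: (@foldr_single _ Cadd C0) => [y|y|||k Hk Ne].
  - cring.
  - cring.
  - exact: iota_uniq.
  - done.
  - apply: H; first exact: idx_range.
    by move=> E; apply: Ne; apply: (idx_zk_inj Hk); rewrite E Ek0.
Qed.

Lemma sumZR_single {N f l} : (- Z.of_nat N <= l <= Z.of_nat N)%Z ->
  (forall l', (- Z.of_nat N <= l' <= Z.of_nat N)%Z -> l' <> l -> f l' = 0) ->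
  sumZR N f = f l.
Proof.
  move=> Hl H. have [k0 Hk0 Ek0] := idx_zk Hl. rewrite -Ek0.
  apply: (@foldr_single _ Rplus 0) => [y|y|||k Hk Ne].
  - ring.
  - ring.
  - exact: iota_uniq.
  - done.
  - apply: H; first exact: idx_range.
    by move=> E; apply: Ne; apply: (idx_zk_inj Hk); rewrite E Ek0.
Qed.

Lemma sumI_single {d} {f : 'I_d -> Cx} j : (forall i, i <> j -> f i = C0) -> sumI f = f j.
Proof.
  move=> H. apply: (@foldr_single _ Cadd C0) => [y|y|||k _ Hk].
  - cring.
  - cring.
  - exact: enum_uniq.
  - by rewrite mem_enum.
  - exact: H.
Qed.

Lemma Vnorm_single {d} {v : Cvec d} j : (forall i, i <> j -> v i = C0) -> Vnorm v = Cmod (v j).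
Proof.
  move=> H. apply: (@foldr_single _ Rplus 0 _ _ _ _ (fun i => Cmod (v i)))
    => [y|y|||k _ Hk].
  - ring.
  - ring.
  - exact: enum_uniq.
  - by rewrite mem_enum.
  - by rewrite H // Cmod_C0.
Qed.

Lemma Vnorm_bound d (v : Cvec d) r : (forall i, Cmod (v i) <= r) -> Vnorm v <= INR d * r.
Proof.
  move=> H. rewrite -[in INR d](size_enum_ord d).
  exact: (@sumR_bound _ (enum 'I_d) (fun i => Cmod (v i))).
Qed.

Definition inchi (a b eps : R) (l : Z) (t : R) : Prop :=
  a <= t /\ a + IZR l * eps <= t /\ t <= b /\ t <= b + IZR l * eps.

Lemma chi_in a b eps l t : inchi a b eps l t -> chi a b eps l t = C1.
Proof.
  rewrite /chi /inchi => [[H1 [H2 [H3 H4]]]].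
  destruct (Rle_dec _ _) as [?|H]; last by exfalso; apply: H; apply: Rmax_lub.
  destruct (Rle_dec _ _) as [?|H] => //. by exfalso; apply: H; apply: Rmin_glb.
Qed.

Lemma chi_out a b eps l t : ~ inchi a b eps l t -> chi a b eps l t = C0.
Proof.
  rewrite /chi /inchi => H.
  destruct (Rle_dec _ _) => //. destruct (Rle_dec _ _) => //. exfalso. apply: H.
  have := Rmax_l a (a + IZR l * eps). have := Rmax_r a (a + IZR l * eps).
  have := Rmin_l b (b + IZR l * eps). have := Rmin_r b (b + IZR l * eps). lra.
Qed.

Lemma chi_cases a b eps l t : chi a b eps l t = C0 \/ chi a b eps l t = C1.
Proof. rewrite /chi. repeat destruct (Rle_dec _ _); tauto. Qed.

Lemma chi_C1_in {a b eps l t} : chi a b eps l t = C1 -> inchi a b eps l t.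
Proof.
  move=> H. apply: NNPP => Hn. rewrite chi_out // /C0 /C1 in H.
  case: H. lra.
Qed.

Lemma Cmod_chi a b eps l t : Cmod (chi a b eps l t) <= 1.
Proof. case: (chi_cases a b eps l t) => ->; rewrite ?Cmod_C0 ?Cmod_C1; lra. Qed.

Lemma chi_iff a b eps l l' t t' :
  (inchi a b eps l t <-> inchi a b eps l' t') -> chi a b eps l t = chi a b eps l' t'.
Proof.
  move=> E. have [H|H] := classic (inchi a b eps l' t').
  - by rewrite !chi_in //; apply/E.
  - by rewrite !chi_out // => /E.
Qed.

Lemma chi_neg a b eps l t : chi a b eps (- l) t = chi a b eps l (t + IZR l * eps).
Proof. apply: chi_iff. rewrite /inchi opp_IZR. split; lra. Qed.

Lemma chi_const {a b eps l t0 s r} :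
  r <= Rabs (t0 - a) -> r <= Rabs (t0 - (a + IZR l * eps)) ->
  r <= Rabs (t0 - b) -> r <= Rabs (t0 - (b + IZR l * eps)) ->
  Rabs (s - t0) < r -> chi a b eps l s = chi a b eps l t0.
Proof.
  move=> H1 H2 H3 H4 Hs. apply: chi_iff. rewrite /inchi.
  move: H1 H2 H3 H4 Hs. set p := IZR l * eps. rewrite /Rabs.
  repeat case: Rcase_abs => ?; split; move=> [? [? [? ?]]]; repeat split; lra.
Qed.

(** The tent function of half-width del centred at t0. *)

Definition phi (del t0 t : R) : R :=
  (del - Rabs (t - t0) + Rabs (del - Rabs (t - t0))) / 2.

Lemma phi_ge0 del t0 t : 0 <= phi del t0 t.
Proof. rewrite /phi. set u := Rabs (t - t0). rewrite /Rabs. case: Rcase_abs => ?; lra. Qed.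

Lemma phi_out del t0 t : del <= Rabs (t - t0) -> phi del t0 t = 0.
Proof. move=> H. rewrite /phi [Rabs (del - _)]Rabs_left1; lra. Qed.

Lemma phi_in del t0 t : Rabs (t - t0) < del -> 0 < phi del t0 t.
Proof. move=> H. rewrite /phi [Rabs (del - _)]Rabs_right; lra. Qed.

Lemma phi_le del t0 t : 0 <= del -> phi del t0 t <= del.
Proof.
  move=> H. rewrite /phi. have := Rabs_pos (t - t0). set u := Rabs (t - t0).
  rewrite /Rabs. case: Rcase_abs => ?; lra.
Qed.

Lemma phi_shift del t0 t s : phi del t0 (t + s) = phi del (t0 - s) t.
Proof. rewrite /phi. by replace (t + s - t0) with (t - (t0 - s)) by ring. Qed.

Lemma phi_lip del t0 s t : Rabs (phi del t0 s - phi del t0 t) <= Rabs (s - t).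
Proof.
  rewrite /phi.
  have T1 := Rabs_triang_inv (s - t0) (t - t0).
  have T2 := Rabs_triang_inv (t - t0) (s - t0).
  replace (s - t0 - (t - t0)) with (s - t) in T1 by ring.
  replace (t - t0 - (s - t0)) with (- (s - t)) in T2 by ring.
  rewrite Rabs_Ropp in T2.
  move: T1 T2. set u := Rabs (s - t0). set v := Rabs (t - t0).
  have Hu : 0 <= u by apply: Rabs_pos. have Hv : 0 <= v by apply: Rabs_pos.
  clearbody u v. rewrite /Rabs. repeat case: Rcase_abs => ?; lra.
Qed.

Lemma phi_cont del t0 t : continuous (phi del t0) t.
Proof.
  apply/continuity_pt_filterlim => e He. exists e. split => // s [_ Hs].
  apply: Rle_lt_trans Hs. exact: phi_lip.
Qed.

Lemma ex_RInt_cont (f : R -> R) p q : (forall t, continuous f t) -> ex_RInt f p q.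
Proof. move=> H. apply: (@ex_RInt_continuous R_CompleteNormedModule) => z _. exact: H. Qed.

Lemma RInt_zero_fun (f : R -> R) p q :
  p <= q -> (forall t, p < t < q -> f t = 0) -> RInt f p q = 0.
Proof.
  move=> Hpq H. rewrite (RInt_ext f (fun _ => 0)).
  - rewrite RInt_const /scal /= /mult /=. ring.
  - move=> t [H1 H2]. apply: H. rewrite Rmin_left in H1; try lra. rewrite Rmax_right in H2; lra.
Qed.

Definition tent_area (del : R) : R := RInt (phi del 0) (- del) del.

Lemma tent_area_pos del : 0 < del -> 0 < tent_area del.
Proof.
  move=> Hd. apply: RInt_gt_0; first lra.
  - move=> t Ht. apply: phi_in. rewrite /Rabs. case: Rcase_abs => ?; lra.
  - move=> t _. exact: phi_cont.
Qed.

Lemma tent_integral del t0 p q : 0 < del -> p <= t0 - del -> t0 + del <= q ->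
  RInt (phi del t0) p q = tent_area del.
Proof.
  move=> Hd H1 H2.
  have Ex : forall u v, ex_RInt (phi del t0) u v by move=> u v; apply/ex_RInt_cont/phi_cont.
  rewrite -(RInt_Chasles (phi del t0) p (t0 - del) q) //.
  rewrite -(RInt_Chasles (phi del t0) (t0 - del) (t0 + del) q) //.
  rewrite (RInt_zero_fun (phi del t0) p (t0 - del)) //; last first.
    by move=> t Ht; apply: phi_out; rewrite Rabs_left1; lra.
  rewrite (RInt_zero_fun (phi del t0) (t0 + del) q) //; last first.
    by move=> t Ht; apply: phi_out; rewrite Rabs_right; lra.
  - have H := RInt_comp_lin (phi del t0) 1 t0 (- del) del.
    replace (1 * - del + t0) with (t0 - del) in H by ring.
    replace (1 * del + t0) with (t0 + del) in H by ring.
    rewrite -H; last by apply/ex_RInt_cont/phi_cont.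
    rewrite /plus /= /tent_area Rplus_0_l Rplus_0_r.
    apply: RInt_ext => y _. rewrite /scal /= /mult /= Rmult_1_l Rmult_1_l phi_shift.
    f_equal. ring.
Qed.

Lemma sumR_cont (T : Type) (s : seq T) (g : T -> R -> R) t :
  (forall k, continuous (g k) t) -> continuous (fun t => sumR s (fun k => g k t)) t.
Proof.
  move=> H. elim: s => [|k s IH] /=; first exact: continuous_const.
  exact: (continuous_plus (fun t => g k t) (fun t => sumR s (fun k => g k t))).
Qed.

Lemma RInt_sumR (T : Type) (s : seq T) (g : T -> R -> R) p q :
  (forall k t, continuous (g k) t) ->
  RInt (fun t => sumR s (fun k => g k t)) p q = sumR s (fun k => RInt (g k) p q).
Proof.
  move=> H. elim: s => [|k s IH] /=.
  - rewrite RInt_const /scal /= /mult /=. ring.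
  - rewrite -IH. apply: (RInt_plus (g k) (fun t => sumR s (fun k => g k t))).
    + exact/ex_RInt_cont/H.
    + apply: ex_RInt_cont => t. apply: sumR_cont => k'. exact: H.
Qed.

Lemma common_radius (T : eqType) (s : seq T) (P : T -> R -> Prop) :
  (forall k r r', 0 < r' <= r -> P k r -> P k r') ->
  (forall k, k \in s -> exists r, 0 < r /\ P k r) ->
  exists r, 0 < r /\ forall k, k \in s -> P k r.
Proof.
  move=> Hm. elim: s => [|k s IH] H; first by exists 1; split=> //; lra.
  have [r1 [Hr1 P1]] := H k (mem_head _ _).
  have [r2 [Hr2 P2]] : exists r, 0 < r /\ forall k, k \in s -> P k r.
    by apply: IH => k' Hk'; apply: H; rewrite in_cons Hk' orbT.
  exists (Rmin r1 r2). split; first exact: Rmin_pos.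
  have Hm12 := Rmin_pos _ _ Hr1 Hr2.
  move=> k' /orP [/eqP ->|Hk'].
  - apply: (Hm _ r1) => //. split=> //. exact: Rmin_l.
  - apply: (Hm _ r2); last exact: P2. split=> //. exact: Rmin_r.
Qed.

Lemma common_radius_Z (N : nat) (P : Z -> R -> Prop) :
  (forall k r r', 0 < r' <= r -> P k r -> P k r') ->
  (forall l, (- Z.of_nat N <= l <= Z.of_nat N)%Z -> exists r, 0 < r /\ P l r) ->
  exists r, 0 < r /\ forall l, (- Z.of_nat N <= l <= Z.of_nat N)%Z -> P l r.
Proof.
  move=> Hm H.
  have [r [Hr Hp]] := @common_radius _ (idx N) (fun k r => P (zk N k) r)
     (fun k => Hm (zk N k)) (fun k Hk => H (zk N k) (idx_range Hk)).
  exists r. split=> // l /idx_zk [k Hk <-]. exact: Hp.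
Qed.

Lemma common_radius_I (d : nat) (P : 'I_d -> R -> Prop) :
  (forall k r r', 0 < r' <= r -> P k r -> P k r') ->
  (forall i, exists r, 0 < r /\ P i r) ->
  exists r, 0 < r /\ forall i, P i r.
Proof.
  move=> Hm H.
  have [r [Hr Hp]] := @common_radius _ (enum 'I_d) P Hm (fun k _ => H k).
  exists r. split=> // i. apply: Hp. by rewrite mem_enum.
Qed.

(** Piecewise continuous paths are continuous at every point of [a, b]
    within [a, b] (the pieces overlap at their endpoints). *)

Lemma floor_piece a {eps} t : 0 < eps -> exists k : Z,
  a + IZR k * eps <= t < a + (IZR k + 1) * eps.
Proof.
  move=> He. exists (up ((t - a) / eps) - 1)%Z.
  have [H1 H2] := archimed ((t - a) / eps).
  rewrite minus_IZR. set u := IZR (up ((t - a) / eps)) in H1 H2 *.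
  have E : t - a = (t - a) / eps * eps by field; lra.
  split.
  - have : (u - 1) * eps <= (t - a) / eps * eps by apply: Rmult_le_compat_r; lra. lra.
  - have : (t - a) / eps * eps < (u - 1 + 1) * eps by apply: Rmult_lt_compat_r; lra. lra.
Qed.

Lemma Cpw_cont {a b eps d} {al be : Cvec d} {x} : 0 < eps -> Cpw a b eps al be x ->
  forall i t, a <= t <= b -> forall e, 0 < e -> exists del, 0 < del /\
  forall s, a <= s <= b -> Rabs (s - t) < del -> Cmod (Csub (x s i) (x t i)) < e.
Proof.
  move=> He [_ [_ Hc]] i t Ht e Hep.
  have [k [Hk1 Hk2]] := floor_piece a t He.
  have Hp1 : a + IZR k * eps <= t <= a + (IZR k + 1) * eps /\ a <= t <= b by lra.
  have [d1 [Hd1 H1]] := Hc k i t Hp1 e Hep.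
  have [Ek|Nk] := Req_dec t (a + IZR k * eps).
  - (* t is the left end of piece k and the right end of piece k - 1 *)
    have Hp2 : a + IZR (k - 1) * eps <= t <= a + (IZR (k - 1) + 1) * eps /\ a <= t <= b.
      rewrite minus_IZR. lra.
    have [d2 [Hd2 H2]] := Hc (k - 1)%Z i t Hp2 e Hep.
    exists (Rmin eps (Rmin d1 d2)). split; first by repeat apply: Rmin_pos; lra.
    move=> s Hs Hst.
    have := Rmin_l eps (Rmin d1 d2). have := Rmin_r eps (Rmin d1 d2).
    have := Rmin_l d1 d2. have := Rmin_r d1 d2.
    move: Hst. rewrite {1}/Rabs. case: Rcase_abs => Hsg Hst M1 M2 M3 M4.
    + apply: H2 => //; [rewrite minus_IZR; lra | rewrite /Rabs; case: Rcase_abs; lra].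
    + apply: H1 => //; [lra | rewrite /Rabs; case: Rcase_abs; lra].
  -
    set m := Rmin (t - (a + IZR k * eps)) (a + (IZR k + 1) * eps - t).
    exists (Rmin d1 m). split; first by repeat apply: Rmin_pos; lra.
    move=> s Hs Hst.
    have := Rmin_l d1 m. have := Rmin_r d1 m.
    have := Rmin_l (t - (a + IZR k * eps)) (a + (IZR k + 1) * eps - t).
    have := Rmin_r (t - (a + IZR k * eps)) (a + (IZR k + 1) * eps - t).
    rewrite -/m => M1 M2 M3 M4.
    apply: H1 => //; last lra.
    move: Hst. rewrite /Rabs. case: Rcase_abs => ? ?; lra.
Qed.

Definition Yv {d} (X H : Cvec d) (u : R) : Cvec d := fun i => Cadd (X i) (Cmul (RtoC u) (H i)).

Lemma Yv0 d (X H : Cvec d) : Yv X H 0 = X.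
Proof. apply: functional_extensionality => i. rewrite /Yv. cring. Qed.

Lemma Yv_zero d (X H : Cvec d) u : (forall i, H i = C0) -> Yv X H u = X.
Proof. move=> HH. apply: functional_extensionality => i. rewrite /Yv HH. cring. Qed.

Lemma Box_lin a b eps N c d (x h : R -> Cvec d) eta t :
  Box a b eps N c (fun t i => Cadd (x t i) (Cmul (RtoC eta) (h t i))) t =
  Yv (Box a b eps N c x t) (Box a b eps N c h t) eta.
Proof.
  apply: functional_extensionality => i. rewrite /Box /Yv !sumZ_sumC Cmul_sumC -sumC_add.
  apply: sumC_ext => l _. cring.
Qed.

Lemma Box_single a b eps N c d (h : R -> Cvec d) j t :
  (forall s i, i <> j -> h s i = C0) -> forall i, i <> j -> Box a b eps N c h t i = C0.
Proof. move=> H i Hi. apply: sumZ_zero => l _. rewrite H //. cring. Qed.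

Lemma Box_term_close a b eps d c (x : R -> Cvec d) i l t t0 e' : 0 <= e' ->
  chi a b eps (- l) t = chi a b eps (- l) t0 ->
  (chi a b eps (- l) t0 = C1 ->
     Cmod (Csub (x (t + IZR l * eps) i) (x (t0 + IZR l * eps) i)) < e') ->
  Cmod (Csub (Cmul (c l) (Cmul (x (t + IZR l * eps) i) (chi a b eps (- l) t)))
             (Cmul (c l) (Cmul (x (t0 + IZR l * eps) i) (chi a b eps (- l) t0))))
    <= Cmod (c l) * e'.
Proof.
  move=> He' -> Hx. have Hc0 := Cmod_ge0 (c l).
  case: (chi_cases a b eps (- l) t0) => Hc; rewrite Hc.
  - replace (Csub _ _) with C0 by cring. rewrite Cmod_C0.
    nra.
  - replace (Csub _ _) with
      (Cmul (c l) (Csub (x (t + IZR l * eps) i) (x (t0 + IZR l * eps) i))) by cring.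
    rewrite Cmod_mul. apply: Rmult_le_compat_l => //. exact/Rlt_le/Hx.
Qed.

Lemma Box_term_radius {a b eps d} {al be : Cvec d} {x} : 0 < eps -> Cpw a b eps al be x ->
  forall i l t0 e', 0 < e' -> a <= t0 <= b ->
  (exists r, 0 < r /\
     forall t, Rabs (t - t0) < r -> chi a b eps (- l) t = chi a b eps (- l) t0) ->
  exists r, 0 < r /\ forall t, a <= t <= b -> Rabs (t - t0) < r ->
    chi a b eps (- l) t = chi a b eps (- l) t0 /\
    (chi a b eps (- l) t0 = C1 ->
       Cmod (Csub (x (t + IZR l * eps) i) (x (t0 + IZR l * eps) i)) < e').
Proof.
  move=> He Hx i l t0 e' He' Ht0 [r [Hr Hchi]].
  case: (chi_cases a b eps (- l) t0) => Hc.
  - exists r. split=> // t _ Ht. split; first exact: Hchi.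
    by rewrite Hc /C0 /C1 => -[]; lra.
  - have := chi_C1_in Hc. rewrite /inchi opp_IZR => Hin.
    have [d1 [Hd1 H1]] := Cpw_cont He Hx i (t0 + IZR l * eps) ltac:(lra) e' He'.
    exists (Rmin r d1). split; first exact: Rmin_pos.
    have := Rmin_l r d1. have := Rmin_r r d1. move=> ? ? t Ht Htt0.
    have Ht' := Hchi t ltac:(lra). split=> // _.
    have := @chi_C1_in a b eps (- l) t. rewrite Ht' Hc /inchi opp_IZR => /(_ erefl) Hint.
    apply: H1; first lra.
    by replace (t + IZR l * eps - (t0 + IZR l * eps)) with (t - t0) by ring; lra.
Qed.

Lemma Box_cont {a b eps} N c {d} {al be : Cvec d} {x} : 0 < eps -> Cpw a b eps al be x ->
  forall t0, a <= t0 <= b ->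
  (forall l, (- Z.of_nat N <= l <= Z.of_nat N)%Z -> exists r, 0 < r /\
     forall t, Rabs (t - t0) < r -> chi a b eps (- l) t = chi a b eps (- l) t0) ->
  forall i e, 0 < e -> exists del, 0 < del /\ forall t, a <= t <= b -> Rabs (t - t0) < del ->
    Cmod (Csub (Box a b eps N c x t i) (Box a b eps N c x t0 i)) < e.
Proof.
  move=> He Hx t0 Ht0 Hchi i e Hep.
  set S := sumZR N (fun l => Cmod (c l)).
  have HS : 0 <= S by apply: sumZR_ge0 => l _; apply: Cmod_ge0.
  set e' := e / (S + 1).
  have He' : 0 < e' by apply: Rdiv_lt_0_compat; lra.
  have [del [Hdel Hd]] : exists del, 0 < del /\ forall l,
      (- Z.of_nat N <= l <= Z.of_nat N)%Z -> forall t, a <= t <= b -> Rabs (t - t0) < del ->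
      chi a b eps (- l) t = chi a b eps (- l) t0 /\
      (chi a b eps (- l) t0 = C1 ->
         Cmod (Csub (x (t + IZR l * eps) i) (x (t0 + IZR l * eps) i)) < e').
    apply: common_radius_Z => [k r r' Hr H t Ht Htr|l Hl]; first by apply: H => //; lra.
    exact: Box_term_radius He Hx i l t0 e' He' Ht0 (Hchi l Hl).
  exists del. split=> // t Ht Htc.
  rewrite /Box -sumZ_sub. apply: Rle_lt_trans (Cmod_sumZ _ _) _.
  apply: (@Rle_lt_trans _ (sumZR N (fun l => Cmod (c l) * e'))).
  - apply: sumZR_le => l Hl. have [D1 D2] := Hd l Hl t Ht Htc.
    apply: Box_term_close => //. lra.
  - rewrite (@sumZR_ext N _ (fun l => e' * Cmod (c l))); last by move=> *; ring.
    rewrite /sumZR sumR_scal. change (e' * S < e).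
    have E : (S + 1) * e' = e by rewrite /e'; field; lra.
    nra.
Qed.

Section LagrangianAlongLine.
Variables (a b : R) (d : nat) (L : R -> Cvec d -> Cvec d -> Cx).
Variables (Lx Lv : 'I_d -> R -> Cvec d -> Cvec d -> Cx) (j : 'I_d).
Hypothesis L_partials : complex_partials a b L Lx Lv.
Variables (t : R) (X V H K : Cvec d).
Hypothesis t_in : a <= t <= b.
Hypothesis H_on_j : forall i, i <> j -> H i = C0.
Hypothesis K_on_j : forall i, i <> j -> K i = C0.

Definition Lline (u : R) : Cx := L t (Yv X H u) (Yv V K u).
Definition Lline' (u : R) : Cx :=
  Cadd (Cmul (Lx j t (Yv X H u) (Yv V K u)) (H j)) (Cmul (Lv j t (Yv X H u) (Yv V K u)) (K j)).

Lemma Lline_increment u e : 0 < e -> exists del, 0 < del /\ forall v, Rabs v < del ->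
  Cmod (Csub (Csub (Lline (u + v)) (Lline u)) (Cmul (RtoC v) (Lline' u))) <= e * Rabs v.
Proof.
  move=> He.
  set M := Cmod (H j) + Cmod (K j).
  have HM : 0 <= M by have := Cmod_ge0 (H j); have := Cmod_ge0 (K j); rewrite /M; lra.
  have He' : 0 < e / (M + 1) by apply: Rdiv_lt_0_compat; lra.
  have [del [Hdel Hd]] := L_partials t (Yv X H u) (Yv V K u) t_in _ He'.
  exists (del / (M + 1)). split=> [|v Hv]; first by apply: Rdiv_lt_0_compat; lra.
  pose h' : Cvec d := fun i => Cmul (RtoC v) (H i).
  pose k' : Cvec d := fun i => Cmul (RtoC v) (K i).
  have Hh' : forall i, i <> j -> h' i = C0 by move=> i Hi; rewrite /h' H_on_j //; cring.
  have Hk' : forall i, i <> j -> k' i = C0 by move=> i Hi; rewrite /k' K_on_j //; cring.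
  have Hnorm : Vnorm h' + Vnorm k' = Rabs v * M.
    rewrite (Vnorm_single j Hh') (Vnorm_single j Hk') /h' /k' !Cmod_mul Cmod_RtoC /M. ring.
  have Hsmall : Vnorm h' + Vnorm k' < del.
    rewrite Hnorm. have := Rabs_pos v.
    have : Rabs v * (M + 1) < del / (M + 1) * (M + 1) by apply: Rmult_lt_compat_r; lra.
    have -> : del / (M + 1) * (M + 1) = del by field; lra.
    nra.
  have := Hd h' k' Hsmall.
  have -> : Vadd (Yv X H u) h' = Yv X H (u + v).
    by apply: functional_extensionality => i; rewrite /Vadd /Yv /h'; cring.
  have -> : Vadd (Yv V K u) k' = Yv V K (u + v).
    by apply: functional_extensionality => i; rewrite /Vadd /Yv /k'; cring.
  rewrite (sumI_single j) => [|i Hi]; last by rewrite Hh' // Hk' //; cring.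
  have -> : Cadd (Cmul (Lx j t (Yv X H u) (Yv V K u)) (h' j))
                 (Cmul (Lv j t (Yv X H u) (Yv V K u)) (k' j)) = Cmul (RtoC v) (Lline' u).
    by rewrite /Lline' /h' /k'; cring.
  rewrite Hnorm => Hb. apply: Rle_trans Hb _.
  have : e / (M + 1) * M <= e.
    apply: (Rmult_le_reg_r (M + 1)); first lra.
    have -> : e / (M + 1) * M * (M + 1) = e * M by field; lra. nra.
  have := Rabs_pos v. nra.
Qed.

Lemma Lline_derivative u : derivable_pt_lim (fun u => fst (Lline u)) u (fst (Lline' u)).
Proof.
  move=> e He.
  have [del [Hdel Hd]] := Lline_increment u (e / 2) ltac:(lra).
  exists (mkposreal _ Hdel) => v Hv Hvd.
  have Hvp : 0 < Rabs v by apply: Rabs_pos_lt.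
  set Z := Csub (Csub (Lline (u + v)) (Lline u)) (Cmul (RtoC v) (Lline' u)).
  have -> : (fst (Lline (u + v)) - fst (Lline u)) / v - fst (Lline' u) = fst Z / v.
    rewrite /Z /=. field. lra.
  rewrite Rabs_div //.
  have HZ : Rabs (fst Z) <= e / 2 * Rabs v.
    exact: Rle_trans (Rabs_fst_le Z) (Hd v Hvd).
  apply: (Rmult_lt_reg_r (Rabs v)) => //.
  rewrite /Rdiv Rmult_assoc Rinv_l; nra.
Qed.

Lemma frozen_coefficient_bound eta lx lv e : 0 < eta ->
  (forall th, 0 < th < eta ->
     Cmod (Csub (Lx j t (Yv X H th) (Yv V K th)) lx) < e /\
     Cmod (Csub (Lv j t (Yv X H th) (Yv V K th)) lv) < e) ->
  eta * (fst (Cadd (Cmul lx (H j)) (Cmul lv (K j))) - e * (Cmod (H j) + Cmod (K j)))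
    <= fst (L t (Yv X H eta) (Yv V K eta)) - fst (L t X V).
Proof.
  move=> Heta Hclose.
  have [th [Hmvt Hth]] := MVT_cor2 (fun u => fst (Lline u)) (fun u => fst (Lline' u))
    0 eta Heta (fun u _ => Lline_derivative u).
  rewrite /Lline !Yv0 in Hmvt. rewrite Hmvt Rminus_0_r Rmult_comm.
  apply: Rmult_le_compat_r; first lra.
  have [Hx Hv] := Hclose th Hth.
  set D := Csub (Lline' th) (Cadd (Cmul lx (H j)) (Cmul lv (K j))).
  have HD : Cmod D <= e * (Cmod (H j) + Cmod (K j)).
    have -> : D = Cadd (Cmul (Csub (Lx j t (Yv X H th) (Yv V K th)) lx) (H j))
                       (Cmul (Csub (Lv j t (Yv X H th) (Yv V K th)) lv) (K j)).
      by rewrite /D /Lline'; cring.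
    apply: Rle_trans (Cmod_add_le _ _) _. rewrite !Cmod_mul.
    have := Cmod_ge0 (H j). have := Cmod_ge0 (K j). nra.
  have := Rabs_fst_le D. have -> : fst D = fst (Lline' th) - fst (Cadd (Cmul lx (H j)) (Cmul lv (K j))).
    by rewrite /D /=; ring.
  move=> HfD. have := Rle_abs (- (fst (Lline' th) - fst (Cadd (Cmul lx (H j)) (Cmul lv (K j))))).
  rewrite Rabs_Ropp. lra.
Qed.
End LagrangianAlongLine.

Lemma no_uniform_gain (F : R -> R -> R) (A G : R -> R) a b eta0 :
  a <= b -> 0 < eta0 ->
  (forall eta, ex_RInt (F eta) a b /\ RInt (F eta) a b = A eta) ->
  derivable_pt_lim A 0 0 -> (forall t, continuous G t) ->
  (forall eta, 0 < eta < eta0 -> forall t, a < t < b -> eta * G t <= F eta t - F 0 t) ->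
  RInt G a b <= 0.
Proof.
  move=> Hab Heta0 HF HA HG Hgain. apply: Rnot_lt_le => HGpos.
  have [dA HdA] := HA (RInt G a b / 2) ltac:(lra).
  have HdA0 := cond_pos dA.
  set eta := Rmin (eta0 / 2) (dA / 2).
  have He1 : eta <= eta0 / 2 by apply: Rmin_l.
  have He2 : eta <= dA / 2 by apply: Rmin_r.
  have He3 : 0 < eta by apply: Rmin_pos; lra.
  have := HdA eta ltac:(lra) ltac:(rewrite Rabs_right; lra).
  rewrite Rplus_0_l Rminus_0_r.
  have [Ex1 R1] := HF eta. have [Ex0 R0] := HF 0.
  have Hdiff : eta * RInt G a b <= A eta - A 0.
    have HGi : ex_RInt G a b by apply: ex_RInt_cont.
    rewrite -R1 -R0.
    have -> : RInt (F eta) a b - RInt (F 0) a b = RInt (fun t => F eta t - F 0 t) a b.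
      by symmetry; apply: (RInt_minus (F eta) (F 0)).
    have -> : eta * RInt G a b = RInt (fun t => eta * G t) a b.
      by symmetry; apply: (RInt_scal G).
    apply: RInt_le => //.
    - exact: ex_RInt_scal.
    - exact: ex_RInt_minus.
    - move=> t Ht. apply: Hgain => //. lra.
  have : RInt G a b <= (A eta - A 0) / eta.
    apply: (Rmult_le_reg_r eta) => //. rewrite /Rdiv Rmult_assoc Rinv_l; lra.
  rewrite /Rabs. case: Rcase_abs => ? ? ?; lra.
Qed.

Lemma Vnorm_Yv_sub d (X Y Z : Cvec d) th del B :
  0 <= th -> th * B <= del -> (forall i, Cmod (Csub (X i) (Z i)) < del) ->
  (forall i, Cmod (Y i) <= B) -> Vnorm (Vsub (Yv X Y th) Z) <= INR d * (2 * del).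
Proof.
  move=> Hth HB HX HY. apply: Vnorm_bound => i. rewrite /Vsub /Yv.
  have -> : Csub (Cadd (X i) (Cmul (RtoC th) (Y i))) (Z i) =
            Cadd (Csub (X i) (Z i)) (Cmul (RtoC th) (Y i)) by cring.
  apply: Rle_trans (Cmod_add_le _ _) _. rewrite Cmod_mul Cmod_RtoC Rabs_right; last lra.
  have := HX i. have := HY i. have := Cmod_ge0 (Y i). nra.
Qed.

Definition far (N : nat) (a b eps r t0 : R) : Prop := forall k : Z,
  (- Z.of_nat (2 * N) <= k <= Z.of_nat (2 * N))%Z ->
  r <= Rabs (t0 - (a + IZR k * eps)) /\ r <= Rabs (t0 - (b + IZR k * eps)).

Lemma far_of_not_breakpoint {N a b eps t} :
  ~ (exists k, (- Z.of_nat (2 * N) <= k <= Z.of_nat (2 * N))%Z /\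
               (t = a + IZR k * eps \/ t = b + IZR k * eps)) ->
  exists r, 0 < r /\ far N a b eps r t.
Proof.
  move=> Hn.
  apply: (@common_radius_Z (2 * N) (fun k r => r <= Rabs (t - (a + IZR k * eps)) /\
                                     r <= Rabs (t - (b + IZR k * eps))))
    => [k r r' Hr [H1 H2]|k Hk]; first by split; lra.
  exists (Rmin (Rabs (t - (a + IZR k * eps))) (Rabs (t - (b + IZR k * eps)))).
  split; last by split; [apply: Rmin_l | apply: Rmin_r].
  apply: Rmin_pos; apply: Rabs_pos_lt => E; apply: Hn; exists k; split=> //; lra.
Qed.

Definition critical_point (a b eps : R) (N : nat) (c : Z -> Cx) {d : nat}
  (x : R -> Cvec d) (L : R -> Cvec d -> Cvec d -> Cx) : Prop :=
  forall h : R -> Cvec d,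
     Cpw a b eps (fun _ => C0) (fun _ => C0) h ->
     exists A : R -> Cx,
       (forall eta : R,
          let y := fun t j => Cadd (x t j) (Cmul (RtoC eta) (h t j)) in
          is_RInt_C (fun t => L t (y t) (Box a b eps N c y t)) a b (A eta)) /\
       derivable_pt_lim (fun eta => fst (A eta)) 0 0 /\
       derivable_pt_lim (fun eta => snd (A eta)) 0 0.

Section LocalVariation.
Variables (a b eps : R) (N d : nat) (c : Z -> Cx) (alpha beta : Cvec d).
Variables (L : R -> Cvec d -> Cvec d -> Cx) (Lx Lv : 'I_d -> R -> Cvec d -> Cvec d -> Cx).
Variables (x : R -> Cvec d) (j : 'I_d) (r t0 : R).
Hypothesis eps_pos : 0 < eps.
Hypothesis L_partials : complex_partials a b L Lx Lv.
Hypothesis Lx_cont : forall i, jointly_continuous a b (Lx i).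
Hypothesis Lv_cont : forall i, jointly_continuous a b (Lv i).
Hypothesis x_pw : Cpw a b eps alpha beta x.
Hypothesis r_pos : 0 < r.
Hypothesis t0_far : far N a b eps r t0.
Hypothesis t0_in : a <= t0 <= b.

Local Notation in_range l := (- Z.of_nat N <= l <= Z.of_nat N)%Z.

(* t0 - l eps: where x(t0) is seen by the l-th term of Box x *)
Definition center (l : Z) : R := t0 - IZR l * eps.
Definition inside (l : Z) : Prop := a < center l < b.

Lemma center0 : center 0 = t0.
Proof. rewrite /center /=. ring. Qed.

Lemma t0_interior : a + r <= t0 <= b - r.
Proof.
  have [H1 H2] := t0_far 0%Z ltac:(lia).
  rewrite Rmult_0_l !Rplus_0_r in H1 H2. move: H1 H2. rewrite /Rabs.
  repeat case: Rcase_abs => ?; lra.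
Qed.

Lemma chi_near_t0 l s : in_range l -> Rabs (s - t0) < r -> chi a b eps l s = chi a b eps l t0.
Proof.
  move=> Hl Hs. have [H1 H2] := t0_far 0%Z ltac:(lia). have [H3 H4] := t0_far l ltac:(lia).
  rewrite Rmult_0_l !Rplus_0_r in H1 H2.
  exact: (chi_const H1 H3 H2 H4 Hs).
Qed.

Lemma inside_of_chi l : in_range l -> chi a b eps l t0 = C1 -> inside l.
Proof.
  move=> Hl /chi_C1_in. have [H1 H2] := t0_far l ltac:(lia).
  rewrite /inchi /inside /center. move: H1 H2. rewrite /Rabs.
  repeat case: Rcase_abs => ?; lra.
Qed.

Lemma chi_near_center l l' t : in_range l -> in_range l' ->
  Rabs (t - center l) < r -> chi a b eps (- l') t = chi a b eps (- l') (center l).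
Proof.
  move=> Hl Hl' Ht. rewrite !chi_neg.
  set p := center l + IZR l' * eps.
  have [H1 H2] := t0_far (l - l')%Z ltac:(lia). have [H3 H4] := t0_far l ltac:(lia).
  rewrite minus_IZR in H1 H2.
  apply: (chi_const (t0 := p) (r := r)).
  - by replace (p - a) with (t0 - (a + (IZR l - IZR l') * eps)) by (rewrite /p /center; ring).
  - by replace (p - (a + IZR l' * eps)) with (t0 - (a + IZR l * eps)) by (rewrite /p /center; ring).
  - by replace (p - b) with (t0 - (b + (IZR l - IZR l') * eps)) by (rewrite /p /center; ring).
  - by replace (p - (b + IZR l' * eps)) with (t0 - (b + IZR l * eps)) by (rewrite /p /center; ring).
  - by replace (t + IZR l' * eps - p) with (t - center l) by (rewrite /p; ring).
Qed.

Lemma tent_separated del l l' t : del <= eps / 2 -> l' <> l ->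
  Rabs (t - center l) < del -> phi del (center l') t = 0.
Proof.
  move=> Hdel Hne Ht. apply: phi_out.
  have Hk : 1 <= Rabs (IZR (l' - l)).
    case: (Z_lt_le_dec 0 (l' - l)) => Hs.
    - rewrite Rabs_right; [apply: IZR_le; lia | apply/Rle_ge/IZR_le; lia].
    - rewrite Rabs_left; last by apply: IZR_lt; lia.
      have : IZR (l' - l) <= -1 by apply: IZR_le; lia. lra.
  have E : center l - center l' = IZR (l' - l) * eps by rewrite /center minus_IZR; ring.
  have T := Rabs_triang_inv (center l - center l') (center l - t).
  replace (center l - center l' - (center l - t)) with (t - center l') in T by ring.
  rewrite (Rabs_minus_sym (center l) t) E Rabs_mult (Rabs_right eps) in T; last lra.
  have : eps <= Rabs (IZR (l' - l)) * eps by nra. lra.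
Qed.

Lemma tent_integral_inside del l : 0 < del -> del <= r / 2 -> in_range l -> inside l ->
  RInt (phi del (center l)) a b = tent_area del.
Proof.
  move=> Hdel Hdr Hl. have [H1 H2] := t0_far l ltac:(lia).
  rewrite /inside => Hin. apply: tent_integral => //; move: H1 H2 Hin;
  rewrite /center /Rabs; repeat case: Rcase_abs => ?; lra.
Qed.

Lemma tent_integral_outside del l : del <= r -> in_range l -> ~ inside l ->
  RInt (phi del (center l)) a b = 0.
Proof.
  move=> Hdr Hl Hout. have [H1 H2] := t0_far l ltac:(lia). have := t0_interior.
  rewrite /inside /center in Hout * => Hab.
  apply: RInt_zero_fun => [|t Ht]; first lra.
  apply: phi_out. move: H1 H2. rewrite /Rabs. repeat case: Rcase_abs => ?; lra.
Qed.

Definition BX : R -> Cvec d := Box a b eps N c x.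

Definition E0 : Cx :=
  Cadd (Box_minus a b eps N c (fun s => Lv j s (x s) (BX s)) t0) (Lx j t0 (x t0) (BX t0)).
Definition w : Cx := Cconj E0.
Definition Q : R := fst (Cmul w E0).

Definition LXc (l : Z) : Cx := Lx j (center l) (x (center l)) (BX (center l)).
Definition LVc (l : Z) : Cx := Lv j (center l) (x (center l)) (BX (center l)).

Definition direct_coef : R := fst (Cmul w (LXc 0)).
Definition shifted_coef (l : Z) : R :=
  fst (Cmul w (Cmul (c l) (Cmul (LVc l) (chi a b eps l t0)))).

Lemma Q_split : Q = direct_coef + sumZR N shifted_coef.
Proof.
  rewrite /Q /E0 /direct_coef /LXc center0 Rplus_comm.
  have -> : forall u v : Cx, Cmul w (Cadd u v) = Cadd (Cmul w u) (Cmul w v)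
    by move=> u v; cring.
  rewrite /Box_minus Cmul_sumZ.
  have -> : forall u v : Cx, fst (Cadd u v) = fst u + fst v by [].
  by rewrite fst_sumZ.
Qed.

(* M l bounds the size of the perturbation near center l, per unit of tent *)
Definition M (l : Z) : R := Cmod w * (1 + Cmod (c l)).
Definition SM : R := sumZR N M.
Definition SC : R := sumZR N (fun l => Cmod (c l)).
(* tolerance on the frozen coefficients; small enough to keep a gain of 3Q/4 *)
Definition tol : R := Q / (4 * (SM + 1)).
(* tolerance on the path near the centers, giving a Vnorm error <= rho/3 *)
Definition path_tol (rho : R) : R := rho / (6 * (INR d + 1)).

Lemma M_ge0 l : 0 <= M l.
Proof. rewrite /M. have := Cmod_ge0 w. have := Cmod_ge0 (c l). nra. Qed.

Lemma SM_ge0 : 0 <= SM.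
Proof. apply: sumZR_ge0 => l _. exact: M_ge0. Qed.

Lemma SC_ge0 : 0 <= SC.
Proof. apply: sumZR_ge0 => l _. exact: Cmod_ge0. Qed.

Lemma Q_pos : E0 <> C0 -> 0 < Q.
Proof. exact: Cconj_mul_pos. Qed.

Lemma tol_pos : E0 <> C0 -> 0 < tol.
Proof. move=> /Q_pos HQ. have := SM_ge0. rewrite /tol => HS. apply: Rdiv_lt_0_compat; lra. Qed.

Lemma path_tol_pos rho : 0 < rho -> 0 < path_tol rho.
Proof. move=> Hr. have := pos_INR d. rewrite /path_tol => Hd. apply: Rdiv_lt_0_compat; lra. Qed.

Lemma path_tol_spec rho : 0 <= rho -> INR d * (2 * path_tol rho) <= rho / 3.
Proof.
  move=> Hr. have Hd := pos_INR d. rewrite /path_tol.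
  have -> : INR d * (2 * (rho / (6 * (INR d + 1)))) = rho / 3 * (INR d / (INR d + 1))
    by field; lra.
  have : INR d / (INR d + 1) <= 1.
    apply: (Rmult_le_reg_r (INR d + 1)); first lra.
    rewrite /Rdiv Rmult_assoc Rinv_l; lra.
  nra.
Qed.

Lemma coefficient_radius e : 0 < e -> exists rho, 0 < rho /\ forall l, in_range l -> inside l ->
  forall s y v, a <= s <= b ->
  Rabs (s - center l) + Vnorm (Vsub y (x (center l))) + Vnorm (Vsub v (BX (center l))) < rho ->
  Cmod (Csub (Lx j s y v) (LXc l)) < e /\ Cmod (Csub (Lv j s y v) (LVc l)) < e.
Proof.
  move=> He. apply: common_radius_Z => [k rr rr' Hrr H Hi s y v Hs Hlt|l Hl].
  - apply: H => //. lra.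
  - have [Hi|Hi] := classic (inside l); last by exists 1; split=> [|/Hi]; [lra|].
    have Hcl : a <= center l <= b by rewrite /inside in Hi; lra.
    have [r1 [Hr1 H1]] := Lx_cont j (center l) (x (center l)) (BX (center l)) Hcl e He.
    have [r2 [Hr2 H2]] := Lv_cont j (center l) (x (center l)) (BX (center l)) Hcl e He.
    exists (Rmin r1 r2). split; first exact: Rmin_pos.
    have := Rmin_l r1 r2. have := Rmin_r r1 r2.
    move=> ? ? _ s y v Hs Hlt. split; [apply: H1 | apply: H2] => //; lra.
Qed.

Lemma path_radius e : 0 < e -> exists sig, 0 < sig /\ forall l, in_range l -> inside l ->
  forall s, a <= s <= b -> Rabs (s - center l) < sig -> forall i,
  Cmod (Csub (x s i) (x (center l) i)) < e /\ Cmod (Csub (BX s i) (BX (center l) i)) < e.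
Proof.
  move=> He. apply: common_radius_Z => [k rr rr' Hrr H Hi s Hs Hlt|l Hl].
  - apply: H => //. lra.
  - have [Hi|Hi] := classic (inside l); last by exists 1; split=> [|/Hi]; [lra|].
    have Hcl : a <= center l <= b by rewrite /inside in Hi; lra.
    have Hchi : forall l', in_range l' -> exists r', 0 < r' /\ forall t,
        Rabs (t - center l) < r' -> chi a b eps (- l') t = chi a b eps (- l') (center l).
      move=> l' Hl'. exists r. split=> // t. exact: chi_near_center.
    have [sg [Hsg Hsgp]] : exists sg, 0 < sg /\ forall i s, a <= s <= b ->
        Rabs (s - center l) < sg ->
        Cmod (Csub (x s i) (x (center l) i)) < e /\ Cmod (Csub (BX s i) (BX (center l) i)) < e.
      apply: (@common_radius_I d (fun i sg => forall s, a <= s <= b -> Rabs (s - center l) < sg ->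
          Cmod (Csub (x s i) (x (center l) i)) < e /\
          Cmod (Csub (BX s i) (BX (center l) i)) < e))
        => [k rr rr' Hrr H s Hs Hlt|i]; first by apply: H => //; lra.
      have [d1 [Hd1 H1]] := Cpw_cont eps_pos x_pw i (center l) Hcl e He.
      have [d2 [Hd2 H2]] := Box_cont N c eps_pos x_pw (center l) Hcl Hchi i e He.
      exists (Rmin d1 d2). split; first exact: Rmin_pos.
      have := Rmin_l d1 d2. have := Rmin_r d1 d2.
      move=> ? ? s Hs Hlt. split; [apply: H1 | apply: H2] => //; lra.
    exists sg. split=> // _ s Hs Hlt i. exact: Hsgp.
Qed.

Section TestFunction.
Hypothesis E0_nz : E0 <> C0.
Variables rho sig : R.
Hypothesis rho_pos : 0 < rho.
Hypothesis coef_close : forall l, in_range l -> inside l -> forall s y v, a <= s <= b ->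
  Rabs (s - center l) + Vnorm (Vsub y (x (center l))) + Vnorm (Vsub v (BX (center l))) < rho ->
  Cmod (Csub (Lx j s y v) (LXc l)) < tol /\ Cmod (Csub (Lv j s y v) (LVc l)) < tol.
Hypothesis sig_pos : 0 < sig.
Hypothesis path_close : forall l, in_range l -> inside l ->
  forall s, a <= s <= b -> Rabs (s - center l) < sig -> forall i,
  Cmod (Csub (x s i) (x (center l) i)) < path_tol rho /\
  Cmod (Csub (BX s i) (BX (center l) i)) < path_tol rho.

Definition del : R := Rmin (Rmin (eps / 4) (r / 2)) (Rmin (rho / 3) sig).

Lemma del_spec : 0 < del /\ del <= eps / 4 /\ del <= r / 2 /\ del <= rho / 3 /\ del <= sig.
Proof.
  rewrite /del.
  have := Rmin_l (Rmin (eps / 4) (r / 2)) (Rmin (rho / 3) sig).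
  have := Rmin_r (Rmin (eps / 4) (r / 2)) (Rmin (rho / 3) sig).
  have := Rmin_l (eps / 4) (r / 2). have := Rmin_r (eps / 4) (r / 2).
  have := Rmin_l (rho / 3) sig. have := Rmin_r (rho / 3) sig.
  have : 0 < Rmin (Rmin (eps / 4) (r / 2)) (Rmin (rho / 3) sig).
    by repeat apply: Rmin_pos; lra.
  lra.
Qed.

Definition h : R -> Cvec d := fun t i => if i == j then Cmul w (RtoC (phi del t0 t)) else C0.
Definition Bh : R -> Cvec d := Box a b eps N c h.

Lemma h_off s i : i <> j -> h s i = C0.
Proof. move=> /eqP Hi. by rewrite /h (negbTE Hi). Qed.

Lemma h_on s : h s j = Cmul w (RtoC (phi del t0 s)).
Proof. by rewrite /h eqxx. Qed.

Lemma Bh_off s i : i <> j -> Bh s i = C0.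
Proof. exact: (@Box_single a b eps N c d h j s h_off i). Qed.

Lemma h_admissible : Cpw a b eps (fun _ => C0) (fun _ => C0) h.
Proof.
  have [Hdel [_ [Hdr _]]] := del_spec. have := t0_interior => Hint.
  split; [|split].
  - apply: functional_extensionality => i. rewrite /h. case: (i == j) => //.
    rewrite phi_out; [cring | rewrite Rabs_left1; lra].
  - apply: functional_extensionality => i. rewrite /h. case: (i == j) => //.
    rewrite phi_out; [cring | rewrite Rabs_right; lra].
  - (* h is Lipschitz with constant |w| *)
    move=> l i t _ e He. have Hw := Cmod_ge0 w.
    exists (e / (Cmod w + 1)). split=> [|s _ Hst]; first by apply: Rdiv_lt_0_compat; lra.
    rewrite /h. case: (i == j); last by replace (Csub _ _) with C0 by cring; rewrite Cmod_C0.
    replace (Csub _ _) with (Cmul w (RtoC (phi del t0 s - phi del t0 t))) by cring.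
    rewrite Cmod_mul Cmod_RtoC.
    have := phi_lip del t0 s t. have := Rabs_pos (phi del t0 s - phi del t0 t).
    have : Cmod w * (e / (Cmod w + 1)) < e.
      apply: (Rmult_lt_reg_r (Cmod w + 1)); first lra.
      have -> : Cmod w * (e / (Cmod w + 1)) * (Cmod w + 1) = Cmod w * e by field; lra.
      nra.
    nra.
Qed.

Lemma Bh_on t : Bh t j =
  sumZ N (fun l => Cmul (c l) (Cmul (Cmul w (RtoC (phi del (center l) t))) (chi a b eps (- l) t))).
Proof. apply: sumZ_ext => l _. by rewrite h_on phi_shift. Qed.

Lemma Bh_near l t : in_range l -> Rabs (t - center l) < del ->
  Bh t j = Cmul (c l) (Cmul (Cmul w (RtoC (phi del (center l) t))) (chi a b eps l t0)).
Proof.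
  move=> Hl Ht. have [_ [Hde [Hdr _]]] := del_spec.
  rewrite Bh_on (sumZ_single Hl) => [|l' Hl' Hne].
  - rewrite chi_neg (chi_near_t0 l (t + IZR l * eps) Hl) //.
    replace (t + IZR l * eps - t0) with (t - center l) by (rewrite /center; ring). lra.
  - rewrite (tent_separated del l l' t) //; [cring | lra].
Qed.

Lemma phi_t0_near l t : l <> 0%Z -> Rabs (t - center l) < del -> phi del t0 t = 0.
Proof.
  move=> Hl0 Ht. have [_ [Hde _]] := del_spec. rewrite -center0.
  apply: (tent_separated del l 0 t) => //; first lra.
  by move=> E; apply: Hl0.
Qed.

Definition Bmax : R := (1 + SC) * (Cmod w * del).

Lemma perturbation_bound s i : Cmod (h s i) <= Bmax /\ Cmod (Bh s i) <= Bmax.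
Proof.
  have [Hdel [Hde _]] := del_spec. have Hw := Cmod_ge0 w. have HSC := SC_ge0.
  have Hh : forall s i, Cmod (h s i) <= Cmod w * del.
    move=> s' i'. rewrite /h. case: (i' == j); last by rewrite Cmod_C0; nra.
    rewrite Cmod_mul Cmod_RtoC Rabs_right; last exact/Rle_ge/phi_ge0.
    apply: Rmult_le_compat_l => //. apply: phi_le. lra.
  have Hwd : 0 <= Cmod w * del by nra.
  split; first by have := Hh s i; rewrite /Bmax; nra.
  apply: Rle_trans (Cmod_sumZ _ _) _.
  apply: (@Rle_trans _ (sumZR N (fun l => Cmod w * del * Cmod (c l)))).
  - apply: sumZR_le => l _. rewrite !Cmod_mul.
    have := Hh (s + IZR l * eps) i. have := Cmod_chi a b eps (- l) s.
    have := Cmod_ge0 (chi a b eps (- l) s). have := Cmod_ge0 (h (s + IZR l * eps) i).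
    have := Cmod_ge0 (c l).
    move: (Cmod (c l)) (Cmod (h _ i)) (Cmod (chi _ _ _ _ _)) => cl hv ch ? ? ? ? ?.
    have : hv * ch <= Cmod w * del by nra.
    nra.
  - rewrite sumZR_scal /Bmax -/SC. nra.
Qed.

Lemma perturbation_size_near l t : in_range l -> Rabs (t - center l) < del ->
  Cmod (h t j) + Cmod (Bh t j) <= M l * phi del (center l) t.
Proof.
  move=> Hl Ht. set p := phi del (center l) t.
  have Hp : 0 <= p := phi_ge0 _ _ _. have Hw := Cmod_ge0 w. have Hc := Cmod_ge0 (c l).
  have Hh : Cmod (h t j) <= Cmod w * p.
    rewrite h_on Cmod_mul Cmod_RtoC.
    case: (Z.eq_dec l 0) => [El|Hl0].
    - rewrite /p El center0 Rabs_right; [lra | exact/Rle_ge/phi_ge0].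
    - rewrite (phi_t0_near _ _ Hl0 Ht) Rabs_R0. nra.
  have HB : Cmod (Bh t j) <= Cmod (c l) * (Cmod w * p).
    rewrite (Bh_near _ _ Hl Ht) -/p !Cmod_mul Cmod_RtoC Rabs_right; last exact/Rle_ge.
    apply: Rmult_le_compat_l => //.
    have := Cmod_chi a b eps l t0. have := Cmod_ge0 (chi a b eps l t0).
    have : 0 <= Cmod w * p by nra.
    nra.
  rewrite /M. nra.
Qed.

Lemma frozen_form_near l t : in_range l -> Rabs (t - center l) < del ->
  fst (Cadd (Cmul (LXc l) (h t j)) (Cmul (LVc l) (Bh t j))) =
  direct_coef * phi del t0 t + shifted_coef l * phi del (center l) t.
Proof.
  move=> Hl Ht. rewrite h_on (Bh_near _ _ Hl Ht) /direct_coef /shifted_coef.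
  case: (Z.eq_dec l 0) => [->|Hl0].
  - rewrite center0 /=. ring.
  - rewrite (phi_t0_near _ _ Hl0 Ht) /=. ring.
Qed.

(* The guaranteed gain per unit eta: frozen coefficients minus the tolerance. *)
Definition gain (l : Z) : R := shifted_coef l - tol * M l.
Definition G (t : R) : R :=
  direct_coef * phi del t0 t + sumZR N (fun l => gain l * phi del (center l) t).

Lemma G_near l t : in_range l -> Rabs (t - center l) < del ->
  G t = direct_coef * phi del t0 t + gain l * phi del (center l) t.
Proof.
  move=> Hl Ht. have [_ [Hde _]] := del_spec. rewrite /G (sumZR_single Hl) // => l' _ Hne.
  rewrite (tent_separated del l l' t) //; [ring | lra].
Qed.

Lemma G_cont t : continuous G t.
Proof.
  apply: (continuous_plus (fun t => direct_coef * phi del t0 t)).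
  - apply: (continuous_mult (fun _ => direct_coef)); [exact: continuous_const | exact: phi_cont].
  - apply: sumR_cont => k.
    apply: (continuous_mult (fun _ => gain (zk N k))); [exact: continuous_const | exact: phi_cont].
Qed.

Lemma G_integral :
  RInt G a b = direct_coef * tent_area del +
               sumZR N (fun l => gain l * RInt (phi del (center l)) a b).
Proof.
  have [Hdel [_ [Hdr _]]] := del_spec. have := t0_interior => Hint.
  have Hcont : forall g l t, continuous (fun t => g * phi del (center l) t) t.
    by move=> g l t; apply: continuous_mult; [exact: continuous_const | exact: phi_cont].
  rewrite /G (RInt_plus (fun t => direct_coef * phi del t0 t)); first last.
  - by apply: ex_RInt_cont => t; apply: sumR_cont => k; apply: Hcont.
  - by apply: ex_RInt_cont => t; rewrite -center0; apply: Hcont.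
  rewrite (RInt_scal (phi del t0)); last exact/ex_RInt_cont/phi_cont.
  have Hin0 : inside 0 by rewrite /inside center0; lra.
  rewrite -center0 tent_integral_inside //; last lia.
  rewrite /sumZR RInt_sumR => [|k t]; last exact: Hcont.
  congr (_ + _). apply: sumR_ext => k _. apply: RInt_scal. exact/ex_RInt_cont/phi_cont.
Qed.

Lemma G_integral_pos : 0 < RInt G a b.
Proof.
  have [Hdel [_ [Hdr _]]] := del_spec.
  set T := tent_area del. have HT : 0 < T := tent_area_pos _ Hdel.
  have Hle : sumZR N (fun l => T * gain l) <=
             sumZR N (fun l => gain l * RInt (phi del (center l)) a b).
    apply: sumZR_le => l Hl. have [Hi|Hi] := classic (inside l).
    - rewrite tent_integral_inside // -/T. lra.
    - rewrite tent_integral_outside //; last lra.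
      have Hc : chi a b eps l t0 = C0.
        by case: (chi_cases a b eps l t0) => // /(inside_of_chi l Hl).
      have -> : gain l = - (tol * M l) by rewrite /gain /shifted_coef Hc /=; ring.
      have := tol_pos E0_nz. have := M_ge0 l. move=> ? ?.
      have : 0 <= tol * M l by nra.
      nra.
  have Hgain : sumZR N gain = sumZR N shifted_coef - tol * SM.
    by rewrite /SM -sumZR_scal /sumZR -sumR_sub.
  rewrite sumZR_scal Hgain in Hle.
  have Htol : tol * SM <= Q / 4.
    have := SM_ge0. have := Q_pos E0_nz. rewrite /tol => ? ?.
    apply: (Rmult_le_reg_r (4 * (SM + 1))); first lra.
    have -> : Q / (4 * (SM + 1)) * SM * (4 * (SM + 1)) = Q * SM by field; lra.
    nra.
  rewrite G_integral -/T.
  have := Q_pos E0_nz. have := Q_split. nra.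
Qed.

Definition Fe (eta t : R) : R := fst (L t (Yv (x t) (h t) eta) (Yv (BX t) (Bh t) eta)).

Lemma Fe_unperturbed eta t :
  (forall i, h t i = C0) -> (forall i, Bh t i = C0) -> Fe eta t = Fe 0 t.
Proof. move=> Hh HB. by rewrite /Fe !Yv_zero. Qed.

(* Away from all centers both the perturbation and G vanish. *)
Lemma gain_away eta t : (forall l, in_range l -> del <= Rabs (t - center l)) ->
  eta * G t <= Fe eta t - Fe 0 t.
Proof.
  move=> Haway.
  have Hz : forall l, in_range l -> phi del (center l) t = 0.
    move=> l Hl. apply: phi_out. exact: Haway.
  have Hp0 : phi del t0 t = 0 by rewrite -center0; apply: Hz; lia.
  rewrite Fe_unperturbed => [|i|i].
  - have -> : G t = 0.
      rewrite /G Hp0 (sumZR_ext N _ (fun l => 0 * 0)) => [|l Hl]; last by rewrite Hz //; ring.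
      rewrite sumZR_scal. ring.
    lra.
  - have [->|/eqP Hij] := eqVneq i j; last exact: h_off.
    rewrite h_on Hp0. cring.
  - have [->|/eqP Hij] := eqVneq i j; last exact: Bh_off.
    rewrite Bh_on. apply: sumZ_zero => l Hl. rewrite Hz //. cring.
Qed.

(* Near a center whose indicator vanishes at t0 the perturbation is zero. *)
Lemma gain_inactive eta l t : 0 <= eta -> in_range l -> Rabs (t - center l) < del ->
  chi a b eps l t0 = C0 -> eta * G t <= Fe eta t - Fe 0 t.
Proof.
  move=> Heta Hl Ht Hc.
  have Hl0 : l <> 0%Z.
    move=> El. move: Hc. rewrite El chi_in; first by case; lra.
    rewrite /inchi Rmult_0_l !Rplus_0_r. lra.
  have Hp0 := phi_t0_near _ _ Hl0 Ht.
  rewrite Fe_unperturbed => [|i|i].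
  - rewrite (G_near _ _ Hl Ht) Hp0 /gain /shifted_coef Hc.
    have -> : fst (Cmul w (Cmul (c l) (Cmul (LVc l) C0))) = 0 by rewrite /=; ring.
    have := tol_pos E0_nz. have := M_ge0 l. have := phi_ge0 del (center l) t. move=> ? ? ?.
    have : 0 <= eta * (tol * M l * phi del (center l) t).
      by apply: Rmult_le_pos => //; apply: Rmult_le_pos => //; nra.
    lra.
  - have [->|/eqP Hij] := eqVneq i j; last exact: h_off.
    rewrite h_on Hp0. cring.
  - have [->|/eqP Hij] := eqVneq i j; last exact: Bh_off.
    rewrite (Bh_near _ _ Hl Ht) Hc. cring.
Qed.

(* Step sizes eta < eta0 keep the perturbed segment within rho of the frozen point. *)
Definition eta0 : R := path_tol rho / (Bmax + 1).

Lemma Bmax_ge0 : 0 <= Bmax.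
Proof.
  have [Hdel _] := del_spec. have := Cmod_ge0 w. have := SC_ge0. rewrite /Bmax => ? ?.
  apply: Rmult_le_pos; [lra | nra].
Qed.

Lemma eta0_pos : 0 < eta0.
Proof.
  have := path_tol_pos _ rho_pos. have := Bmax_ge0. rewrite /eta0 => ? ?.
  apply: Rdiv_lt_0_compat; lra.
Qed.

Lemma segment_coefficients_close eta l t : 0 < eta < eta0 -> a <= t <= b -> in_range l ->
  inside l -> Rabs (t - center l) < del -> forall th, 0 < th < eta ->
  Cmod (Csub (Lx j t (Yv (x t) (h t) th) (Yv (BX t) (Bh t) th)) (LXc l)) < tol /\
  Cmod (Csub (Lv j t (Yv (x t) (h t) th) (Yv (BX t) (Bh t) th)) (LVc l)) < tol.
Proof.
  move=> Heta Ht Hl Hin Htl th Hth.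
  have [Hdel [_ [_ [Hdrho Hdsig]]]] := del_spec.
  apply: coef_close => //.
  have Hsmall : th * Bmax <= path_tol rho.
    have := Bmax_ge0. have := path_tol_pos _ rho_pos. rewrite /eta0 in Heta => ? ?.
    apply: (@Rle_trans _ (eta0 * (Bmax + 1))); first by rewrite /eta0; nra.
    rewrite /eta0. apply: Req_le. field. lra.
  have Hpath := path_close l Hl Hin t Ht ltac:(lra).
  have N1 := @Vnorm_Yv_sub d (x t) (h t) (x (center l)) th _ _ ltac:(lra) Hsmall
    (fun i => proj1 (Hpath i)) (fun i => proj1 (perturbation_bound t i)).
  have N2 := @Vnorm_Yv_sub d (BX t) (Bh t) (BX (center l)) th _ _ ltac:(lra) Hsmall
    (fun i => proj2 (Hpath i)) (fun i => proj2 (perturbation_bound t i)).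
  have := path_tol_spec rho (Rlt_le _ _ rho_pos). lra.
Qed.

(* Near an active center the frozen-coefficient estimate yields the gain. *)
Lemma gain_active eta l t : 0 < eta < eta0 -> a < t < b -> in_range l ->
  Rabs (t - center l) < del -> chi a b eps l t0 = C1 -> eta * G t <= Fe eta t - Fe 0 t.
Proof.
  move=> Heta Ht Hl Htl Hc.
  have Htab : a <= t <= b by lra.
  have Hclose := segment_coefficients_close _ _ _ Heta Htab Hl (inside_of_chi l Hl Hc) Htl.
  have := @frozen_coefficient_bound a b d L Lx Lv j L_partials t (x t) (BX t) (h t) (Bh t)
    Htab (h_off t) (Bh_off t) eta (LXc l) (LVc l) tol (proj1 Heta) Hclose.
  rewrite (frozen_form_near _ _ Hl Htl) /Fe !Yv0 (G_near _ _ Hl Htl) /gain.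
  apply: Rle_trans. apply: Rmult_le_compat_l; first lra.
  have := perturbation_size_near _ _ Hl Htl. have := tol_pos E0_nz. move=> ? ?.
  have : tol * (Cmod (h t j) + Cmod (Bh t j)) <= tol * (M l * phi del (center l) t).
    by apply: Rmult_le_compat_l; lra.
  lra.
Qed.

Lemma pointwise_gain eta t : 0 < eta < eta0 -> a < t < b -> eta * G t <= Fe eta t - Fe 0 t.
Proof.
  move=> Heta Ht.
  have [[l [Hl Htl]]|Haway] := classic (exists l, in_range l /\ Rabs (t - center l) < del).
  - case: (chi_cases a b eps l t0) => Hc.
    + apply: gain_inactive Hl Htl Hc. lra.
    + exact: gain_active Heta Ht Hl Htl Hc.
  - apply: gain_away => l Hl. apply: Rnot_lt_le => Hlt. apply: Haway. by exists l.
Qed.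

Lemma no_ascent : critical_point a b eps N c x L -> False.
Proof.
  move=> Hcrit. have [A [HA [HA0 _]]] := Hcrit h h_admissible.
  have HF : forall eta, ex_RInt (Fe eta) a b /\ RInt (Fe eta) a b = fst (A eta).
    move=> eta. have := HA eta. rewrite /= => -[[pr Hpr] _].
    have E : (fun t => fst (L t (fun i => Cadd (x t i) (Cmul (RtoC eta) (h t i)))
               (Box a b eps N c (fun t i => Cadd (x t i) (Cmul (RtoC eta) (h t i))) t)))
             = Fe eta.
      by apply: functional_extensionality => t; rewrite /Fe Box_lin.
    have H1 := ex_RInt_Reals_1 _ _ _ pr. have H2 := RInt_Reals _ _ _ pr.
    rewrite Hpr E in H2. rewrite E in H1. by split.
  have := t0_interior. have := G_integral_pos. move=> ? ?.
  have := @no_uniform_gain Fe (fun eta => fst (A eta)) G a b eta0 ltac:(lra) eta0_pos HF HA0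
    G_cont (fun eta Heta t => pointwise_gain eta t Heta).
  lra.
Qed.
End TestFunction.

Theorem Euler_Lagrange_at_generic_point : critical_point a b eps N c x L -> E0 = C0.
Proof.
  move=> Hcrit. apply: NNPP => HE.
  have [rho [Hrho Hcoef]] := coefficient_radius _ (tol_pos HE).
  have [sig [Hsig Hpath]] := path_radius _ (path_tol_pos _ Hrho).
  exact: (no_ascent HE _ _ Hrho Hcoef Hsig Hpath Hcrit).
Qed.
End LocalVariation.

Lemma geom_sum e n : sum_f_R0 (fun k => e / pow 2 (S k)) n = e - e / pow 2 (S n).
Proof.
  elim: n => [|n IH].
  - rewrite /sum_f_R0 /pow. field.
  - rewrite tech5 IH. have H := pow_lt 2 n ltac:(lra).
    have -> : pow 2 (S n) = 2 * pow 2 n by [].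
    have -> : pow 2 (S (S n)) = 2 * (2 * pow 2 n) by [].
    field. lra.
Qed.

(* A set contained in {p k, q k : |k| <= N} is covered by intervals of
   lengths e/4, e/8, ... *)
Lemma finite_set_negligible (N : nat) (p q : Z -> R) (E : R -> Prop) :
  (forall t, E t -> exists k, (- Z.of_nat N <= k <= Z.of_nat N)%Z /\ (t = p k \/ t = q k)) ->
  negligible E.
Proof.
  move=> HS e He.
  pose K := (2 * N).+1.
  pose P n := if (n < K)%N then p (zk N n) else q (zk N (n - K)).
  have Hw : forall n, 0 < e / pow 2 (S (S n)).
    by move=> n; apply: Rdiv_lt_0_compat => //; apply: pow_lt; lra.
  exists (fun n => P n - e / pow 2 (S (S n))), (fun n => P n + e / pow 2 (S (S n))).
  split; [|split].
  - move=> n. have := Hw n. lra.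
  - move=> t Ht. have [k [Hk [Et|Et]]] := HS t Ht.
    + exists (Z.to_nat (k + Z.of_nat N)). rewrite /P.
      have -> : (Z.to_nat (k + Z.of_nat N) < K)%N by rewrite /K; lia.
      have -> : zk N (Z.to_nat (k + Z.of_nat N)) = k by rewrite /zk; lia.
      have := Hw (Z.to_nat (k + Z.of_nat N)). lra.
    + exists (K + Z.to_nat (k + Z.of_nat N))%N. rewrite /P.
      have -> : (K + Z.to_nat (k + Z.of_nat N) < K)%N = false by lia.
      have -> : zk N (K + Z.to_nat (k + Z.of_nat N) - K) = k by rewrite /zk; lia.
      have := Hw (K + Z.to_nat (k + Z.of_nat N))%N. lra.
  - move=> n.
    have -> : sum_f_R0 (fun k => P k + e / pow 2 (S (S k)) - (P k - e / pow 2 (S (S k)))) n =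
              sum_f_R0 (fun k => e / pow 2 (S k)) n.
      apply: PartSum.sum_eq => i _. have -> : pow 2 (S (S i)) = 2 * pow 2 (S i) by [].
      field. have := pow_lt 2 (S i) ltac:(lra). lra.
    rewrite geom_sum. have := pow_lt 2 (S n) ltac:(lra) => H.
    have : 0 < e / pow 2 (S n) by apply: Rdiv_lt_0_compat. lra.
Qed.

Theorem mainTheorem2
  (a b eps : R) (N d : nat) (c : Z -> Cx) (alpha beta : Cvec d)
  (L : R -> Cvec d -> Cvec d -> Cx)
  (Lx Lv : 'I_d -> R -> Cvec d -> Cvec d -> Cx)
  (x : R -> Cvec d) :
  a < b -> 0 < eps -> (1 <= N)%nat -> (1 <= d)%nat ->
  jointly_continuous a b L ->
  complex_partials a b L Lx Lv ->
  (forall j, jointly_continuous a b (Lx j)) ->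
  (forall j, jointly_continuous a b (Lv j)) ->
  Cpw a b eps alpha beta x ->
  (* x is a critical point of the discrete action *)
  (forall h : R -> Cvec d,
     Cpw a b eps (fun _ => C0) (fun _ => C0) h ->
     exists A : R -> Cx,
       (forall eta : R,
          let y := fun t j => Cadd (x t j) (Cmul (RtoC eta) (h t j)) in
          is_RInt_C (fun t => L t (y t) (Box a b eps N c y t)) a b (A eta)) /\
       derivable_pt_lim (fun eta => fst (A eta)) 0 0 /\
       derivable_pt_lim (fun eta => snd (A eta)) 0 0) ->
  forall j : 'I_d,
    negligible (fun t => a <= t <= b /\
      Cadd (Box_minus a b eps N c
              (fun s => Lv j s (x s) (Box a b eps N c x s)) t)
           (Lx j t (x t) (Box a b eps N c x t)) <> C0).
Proof.
  move=> _ He _ _ _ HL HLx HLv Hx Hcrit j.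
  apply: (finite_set_negligible (2 * N) (fun k => a + IZR k * eps) (fun k => b + IZR k * eps)).
  move=> t [Ht HE]. apply: NNPP => Hbreak. apply: HE.
  have [r [Hr Hfar]] := far_of_not_breakpoint Hbreak.
  exact: (@Euler_Lagrange_at_generic_point a b eps N d c alpha beta L Lx Lv x j r t
            He HL HLx HLv Hx Hr Hfar Ht Hcrit).
Qed.
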